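(* Let $n\geq5$ and let $U$ be a monomial. Then $x_n^2x_{n-2}^2U\in G(J(P_n)^2)$ if and only if $U\in G(J(P_{n-3})^2)$.
   Context: For $m\geq1$, $P_m$ is the path graph on vertices $x_1,\ldots,x_m$ with edges $\{x_i,x_{i+1}\}$; $J(P_m)$ is its cover ideal in a polynomial ring over a field, generated by the monomials $\prod_{x\in C}x$ with $C$ a minimal vertex cover of $P_m$; $G(I)$ denotes the set of minimal monomial generators of a monomial ideal $I$. *)

From mathcomp Require Import all_boot.
Set Implicit Arguments. Unset Strict Implicit. Unset Printing Implicit Defensive.

(* A monomial x_1^{u 1} ... x_m^{u m} of k[x_1,...,x_m] is represented by its
   exponent vector u : nat -> nat, vanishing outside {1,...,m}. *)
Definition monomial (m : nat) (u : nat -> nat) : Prop :=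
  forall i, u i <> 0 -> 1 <= i <= m.

Definition mdivides (u v : nat -> nat) : Prop := forall i, u i <= v i.

Definition mmul (u v : nat -> nat) : nat -> nat := fun i => u i + v i.

Definition vset (m : nat) (C : nat -> bool) : Prop :=
  forall i, C i -> 1 <= i <= m.

Definition vcover (m : nat) (C : nat -> bool) : Prop :=
  vset m C /\ forall i, 1 <= i < m -> C i || C i.+1.

Definition min_vcover (m : nat) (C : nat -> bool) : Prop :=
  vcover m C /\
  forall C', vcover m C' -> (forall i, C' i -> C i) -> forall i, C' i = C i.

Definition cover_monomial (C : nat -> bool) : nat -> nat := fun i => nat_of_bool (C i).

(* u lies in J(P_m)^2: J(P_m)^2 is the monomial ideal generated by the
   products x_{C1} x_{C2} of two minimal-vertex-cover monomials, so a monomial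
   lies in it iff it is divisible by such a product. *)
Definition in_J2 (m : nat) (u : nat -> nat) : Prop :=
  exists C1 C2, min_vcover m C1 /\ min_vcover m C2 /\
    mdivides (mmul (cover_monomial C1) (cover_monomial C2)) u.

Definition in_G_J2 (m : nat) (u : nat -> nat) : Prop :=
  monomial m u /\ in_J2 m u /\
  forall v, monomial m v -> in_J2 m v -> mdivides v u -> forall i, v i = u i.

Definition xpow (j e : nat) : nat -> nat := fun i => if i == j then e else 0.

From mathcomp Require Import all_boot.
From mathcomp Require Import zify.

Set Implicit Arguments.
Unset Strict Implicit.
Unset Printing Implicit Defensive.

(* A minimal vertex cover of P_(m+3) avoiding x_(m+2) must contain x_(m+1) and
   x_(m+3), and dropping these two vertices is a bijection onto the minimal
   vertex covers of P_m.  A minimal generator of J(P_(m+3))^2 is a product of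
   two minimal-cover monomials; if it is divisible by x_(m+3)^2, both covers
   contain x_(m+3), hence avoid x_(m+2), and the generator is
   x_(m+3)^2 x_(m+1)^2 U with U in k[x_1,...,x_m].  Through the bijection,
   membership in J^2 and divisibility transfer between x_(m+3)^2 x_(m+1)^2 U
   and U. *)

Definition extend_cover (m : nat) (D : nat -> bool) : nat -> bool :=
  fun i => [|| D i, i == m.+1 | i == m.+3].

Definition restrict_cover (m : nat) (C : nat -> bool) : nat -> bool :=
  fun i => (i <= m) && C i.

Definition extend_monomial (m : nat) (u : nat -> nat) : nat -> nat :=
  mmul (mmul (xpow m.+3 2) (xpow m.+1 2)) u.

Definition restrict_monomial (m : nat) (u : nat -> nat) : nat -> nat :=
  fun i => if i <= m then u i else 0.

Lemma vset_eq0 m C i : vset m C -> ~~ (0 < i <= m) -> C i = false.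
Proof. by move=> HC; apply: contraNF => /HC. Qed.

Lemma monomial_eq0 m u i : monomial m u -> ~~ (0 < i <= m) -> u i = 0.
Proof. by move=> Hu; apply: contraNeq => /eqP /Hu. Qed.

Lemma vcover_gap n C i :
  vcover n C -> 0 < i -> i.+2 <= n -> C i.+1 = false -> C i /\ C i.+2.
Proof.
move=> [_ HC] i_gt0 i_lt Ci1.
by split; [move: (HC i) | move: (HC i.+1)]; rewrite Ci1 ?orbF; apply; lia.
Qed.

Lemma min_vcover_last m C : min_vcover m.+2 C -> C m.+2 -> C m.+1 = false.
Proof.
move=> [[Hs Hc] Cmin] Cm2; apply/negbTE/negP => Cm1.
pose C' i := C i && (i != m.+2).
have /(_ m.+2) : forall i, C' i = C i.
  apply: Cmin => [|i /andP[] //]; split=> [i /andP[/Hs] //|i Hi].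
  have [->|ne] := eqVneq i m.+1; first by rewrite /C' Cm1; lia.
  by have /orP[Ci|Ci] := Hc i Hi; rewrite /C' Ci; lia.
by rewrite /C' eqxx andbF Cm2.
Qed.

Lemma vcover_extend m D : vcover m D -> vcover m.+3 (extend_cover m D).
Proof.
move=> [Hs Hc]; split=> [i /or3P[/Hs|/eqP->|/eqP->] //|i Hi]; try lia.
have [i_lt|i_ge] := ltnP i m; last by rewrite /extend_cover; lia.
have /orP[Di|Di] : D i || D i.+1 by apply: Hc; lia.
all: by rewrite /extend_cover Di ?orbT.
Qed.

Lemma vcover_restrict m n C :
  m <= n -> vcover n C -> vcover m (restrict_cover m C).
Proof.
move=> mn [Hs Hc]; split=> [i /andP[i_le /Hs]|i Hi]; first lia.
have [i_le i_lt] : i <= m /\ i < m by lia.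
by rewrite /restrict_cover i_le i_lt; apply: Hc; lia.
Qed.

Lemma extend_cover_sub m (D D' : nat -> bool) :
  (forall i, D' i -> D i) -> forall i, extend_cover m D' i -> extend_cover m D i.
Proof. by move=> sub i; rewrite /extend_cover => /or3P[/sub->|->|->]; rewrite ?orbT. Qed.

Lemma restrict_extend_cover m D :
  vset m D -> restrict_cover m (extend_cover m D) =1 D.
Proof.
move=> HD i; rewrite /restrict_cover /extend_cover.
by have [i_le|i_gt] := leqP i m; [lia | rewrite (vset_eq0 HD) //; lia].
Qed.

Lemma extend_restrict_cover m C :
  vset m.+3 C -> C m.+1 -> C m.+2 = false -> C m.+3 ->
  extend_cover m (restrict_cover m C) =1 C.
Proof.
move=> HC C1 C2 C3 i; rewrite /extend_cover /restrict_cover.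
have [i_le|i_gt] := leqP i m; first lia.
have [i_big|i_small] := ltnP m.+3 i; first by rewrite (vset_eq0 HC) //; lia.
have: i = m.+1 \/ i = m.+2 \/ i = m.+3 by lia.
by case=> [|[|]] ->; rewrite ?C1 ?C2 ?C3; lia.
Qed.

Lemma min_vcover_extend m D :
  min_vcover m D -> min_vcover m.+3 (extend_cover m D).
Proof.
move=> [HD Dmin]; split=> [|C HC sub]; first exact: vcover_extend.
have C2 : C m.+2 = false.
  by apply/negbTE/negP => /sub; rewrite /extend_cover (vset_eq0 HD.1); lia.
have [C1 C3] := vcover_gap HC (ltn0Sn m) (leqnn _) C2.
have res_eq : restrict_cover m C =1 D.
  apply: Dmin; first by apply: vcover_restrict HC; lia.
  by move=> i /andP[i_le /sub]; rewrite /extend_cover; lia.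
by move=> i; rewrite -(extend_restrict_cover HC.1 C1 C2 C3 i) /extend_cover res_eq.
Qed.

Lemma min_vcover_restrict m C :
  min_vcover m.+3 C -> C m.+2 = false -> min_vcover m (restrict_cover m C).
Proof.
move=> [HC Cmin] C2; have [C1 C3] := vcover_gap HC (ltn0Sn m) (leqnn _) C2.
split=> [|D HD sub i]; first by apply: vcover_restrict HC; lia.
have ext_eq : extend_cover m D =1 C.
  apply: Cmin; first exact: vcover_extend.
  by move=> j /(extend_cover_sub sub); rewrite (extend_restrict_cover HC.1 C1 C2 C3).
by rewrite -(restrict_extend_cover HD.1 i) /restrict_cover ext_eq.
Qed.

Lemma extend_monomialE m u i :
  extend_monomial m u i = (i == m.+3) * 2 + (i == m.+1) * 2 + u i.
Proof. by rewrite /extend_monomial /mmul /xpow; do 2 case: eqP. Qed.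

Lemma monomial_extend m u : monomial m u -> monomial m.+3 (extend_monomial m u).
Proof.
move=> Hu i; rewrite extend_monomialE => nz.
by have [ui0|/eqP ui_nz] := eqVneq (u i) 0; [|have := Hu i ui_nz]; lia.
Qed.

Lemma monomial_restrict m n v : monomial n v -> monomial m (restrict_monomial m v).
Proof.
move=> Hv i; rewrite /restrict_monomial.
by case: (leqP i m) => [i_le nz | _ []//]; have := Hv i nz; lia.
Qed.

Lemma mdivides_extend m u v :
  mdivides u v -> mdivides (extend_monomial m u) (extend_monomial m v).
Proof. by move=> uv i; rewrite !extend_monomialE; have := uv i; lia. Qed.

Lemma mdivides_restrict_extend m u v :
  mdivides v (extend_monomial m u) -> mdivides (restrict_monomial m v) u.
Proof.
move=> vu i; have := vu i; rewrite extend_monomialE /restrict_monomial.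
by case: (leqP i m) => //; lia.
Qed.

Lemma mdivides_extend_restrict m v : 2 <= v m.+1 -> 2 <= v m.+3 ->
  mdivides (extend_monomial m (restrict_monomial m v)) v.
Proof.
move=> v1 v3 i; rewrite extend_monomialE /restrict_monomial.
case: (leqP i m) => [i_le|i_gt]; first lia.
have [->|ne1] := eqVneq i m.+1; first lia.
by have [->|ne3] := eqVneq i m.+3; lia.
Qed.

Lemma in_J2_dvd m u v : in_J2 m u -> mdivides u v -> in_J2 m v.
Proof.
move=> [C1 [C2 [H1 [H2 d]]]] uv; exists C1, C2; do 2!split=> //.
by move=> i; apply: leq_trans (d i) (uv i).
Qed.

Lemma in_J2_extend m u : in_J2 m u -> in_J2 m.+3 (extend_monomial m u).
Proof.
move=> [D1 [D2 [H1 [H2 d]]]]; exists (extend_cover m D1), (extend_cover m D2).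
split; [exact: min_vcover_extend | split; first exact: min_vcover_extend].
move=> i; have := d i.
by rewrite extend_monomialE /mmul /cover_monomial /extend_cover; lia.
Qed.

Lemma in_J2_restrict m v : in_J2 m.+3 v -> v m.+2 = 0 ->
  [/\ 2 <= v m.+1, 2 <= v m.+3 & in_J2 m (restrict_monomial m v)].
Proof.
move=> [C1 [C2 [H1 [H2 d]]]] v2.
have [C12 C22] : C1 m.+2 = false /\ C2 m.+2 = false.
  by have := d m.+2; rewrite /mmul /cover_monomial v2; lia.
have [C11 C13] := vcover_gap H1.1 (ltn0Sn m) (leqnn _) C12.
have [C21 C23] := vcover_gap H2.1 (ltn0Sn m) (leqnn _) C22.
split; [have := d m.+1 | have := d m.+3 |]; rewrite ?/mmul ?/cover_monomial; try lia.
exists (restrict_cover m C1), (restrict_cover m C2).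
split; [exact: min_vcover_restrict | split; first exact: min_vcover_restrict].
move=> i; have := d i; rewrite /mmul /cover_monomial /restrict_cover.
by rewrite /restrict_monomial; case: (leqP i m) => _ /=; lia.
Qed.

Lemma in_G_J2_cover_sum n u : in_G_J2 n u ->
  exists C1 C2, [/\ min_vcover n C1, min_vcover n C2 &
    forall i, u i = cover_monomial C1 i + cover_monomial C2 i].
Proof.
move=> [_ [[C1 [C2 [H1 [H2 d]]]] umin]]; exists C1, C2; split=> // i.
symmetry; apply: umin d i => [j|]; last by exists C1, C2; split=> //; split=> // j.
rewrite /mmul /cover_monomial => nz.
by have /orP[/H1.1.1|/H2.1.1] : C1 j || C2 j by lia.
Qed.

Lemma in_G_J2_extend_monomial m U :
  monomial m.+3 U -> in_G_J2 m.+3 (extend_monomial m U) -> monomial m U.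
Proof.
move=> HU /in_G_J2_cover_sum[C1 [C2 [H1 H2 e]]].
have := e m.+3; rewrite extend_monomialE /cover_monomial => e3.
have [C13 C23] : C1 m.+3 /\ C2 m.+3 by lia.
have := e m.+2; rewrite extend_monomialE /cover_monomial.
rewrite (min_vcover_last H1 C13) (min_vcover_last H2 C23) => e2.
have := e m.+1; rewrite extend_monomialE /cover_monomial => e1.
move=> i Ui; have := HU i Ui => i_range.
have [i_le|i_gt] := leqP i m; first lia.
have: i = m.+1 \/ i = m.+2 \/ i = m.+3 by lia.
by case=> [|[|]] ei; move: Ui; rewrite ei; lia.
Qed.

Lemma in_G_J2_extend m U :
  monomial m U -> in_G_J2 m.+3 (extend_monomial m U) <-> in_G_J2 m U.
Proof.
move=> HU; have W2 : extend_monomial m U m.+2 = 0.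
  by rewrite extend_monomialE (monomial_eq0 HU); lia.
split=> [[_ [HJ Wmin]] | [_ [HJ Umin]]].
- have [_ _ HJr] := in_J2_restrict HJ W2.
  split=> //; split=> [|V HV VJ VU i].
    exact: in_J2_dvd HJr (mdivides_restrict_extend (fun i => leqnn _)).
  have := Wmin _ (monomial_extend HV) (in_J2_extend VJ) (mdivides_extend m VU) i.
  by rewrite !extend_monomialE; lia.
- split; first exact: monomial_extend.
  split=> [|v Hv vJ vW i]; first exact: in_J2_extend.
  have v2 : v m.+2 = 0 by have := vW m.+2; rewrite W2; lia.
  have [v1 v3 rJ] := in_J2_restrict vJ v2.
  have r_eq := Umin _ (monomial_restrict Hv) rJ (mdivides_restrict_extend vW).
  have := mdivides_extend_restrict v1 v3 i; have := vW i.
  by rewrite !extend_monomialE r_eq; lia.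
Qed.

Theorem lemma3p9 (n : nat) (U : nat -> nat) :
  5 <= n -> monomial n U ->
  (in_G_J2 n (mmul (mmul (xpow n 2) (xpow (n - 2) 2)) U) <-> in_G_J2 (n - 3) U).
Proof.
move=> n_ge5 HU; have [m En] : exists m, n = m.+3 by exists (n - 3); lia.
subst n.
have -> : m.+3 - 2 = m.+1 by lia.
have -> : m.+3 - 3 = m by lia.
change (in_G_J2 m.+3 (extend_monomial m U) <-> in_G_J2 m U).
split=> [HW | HG]; last exact: (in_G_J2_extend HG.1).2.
exact: (in_G_J2_extend (in_G_J2_extend_monomial HU HW)).1.
Qed.
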